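(* Let $\mathcal{H}$ be the space of real or complex $m\times n$ matrices with Frobenius inner product, $r\ge2$, and $\Sigma=\Sigma_r$ the set of matrices of rank at most $r$. Then uniform recovery of $\Sigma_r$ with the regularizer $\|\cdot\|_\Sigma$ is impossible: the descent set $\mathcal{T}_{\|\cdot\|_\Sigma}(\Sigma)$ equals $\mathcal{E}(\Sigma)$, so that for every linear operator $M$ on $\mathcal{H}$ with nontrivial null space there exists $x_0\in\Sigma_r$ which is not the unique minimizer of $\min_x\|x\|_\Sigma$ subject to $Mx=Mx_0$.
   Context: $\|\cdot\|_\Sigma$ is the atomic norm with atoms $\Sigma\cap S(1)$ ($S(1)$ the unit Frobenius sphere): $\|x\|_\Sigma=\inf\{t\ge0:x\in t\cdot\overline{\mathrm{conv}}(\Sigma\cap S(1))\}$, $+\infty$ if none; $\mathcal{E}(\Sigma)=\{x:\|x\|_\Sigma<\infty\}$. Descent set: $\mathcal{T}_f(\Sigma)=\bigcup_{x\in\Sigma}\{z:f(x+z)\le f(x)\}$. *)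

From HB Require Import structures.
From mathcomp Require Import all_boot all_order all_algebra.
From mathcomp Require Import all_classical all_reals all_analysis.
From mathcomp Require Import complex.
Set Implicit Arguments. Unset Strict Implicit. Unset Printing Implicit Defensive.
Import Order.TTheory GRing.Theory Num.Theory.
Import numFieldNormedType.Exports.
Local Open Scope classical_set_scope.
Local Open Scope ring_scope.

Definition frob2 (K : numFieldType) (m n : nat) (A : 'M[K]_(m, n)) : K :=
  \sum_(i < m) \sum_(j < n) `|A i j| ^+ 2.

Definition unit_sphere (K : numFieldType) (m n : nat) : set 'M[K]_(m, n) :=
  [set A | frob2 A = 1].

Definition Sigma_r (K : numFieldType) (m n r : nat) : set 'M[K]_(m, n) :=
  [set A | (\rank A <= r)%N].

Definition conv_hull (K : numFieldType) (m n : nat) (S : set 'M[K]_(m, n))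
  : set 'M[K]_(m, n) :=
  [set x | exists (k : nat) (w : 'I_k -> K) (a : 'I_k -> 'M[K]_(m, n)),
      (forall i, 0 <= w i) /\ \sum_(i < k) w i = 1 /\
      (forall i, S (a i)) /\ x = \sum_(i < k) w i *: a i].

Definition cl_conv (K : numFieldType) (m n : nat) (S : set 'M[K]_(m, n))
  : set 'M[K]_(m, n) := closure (conv_hull S).

(* atomic norm ||x||_Sigma = inf {t >= 0 : x \in t * clconv(Sigma \cap S(1))},
   +oo if no such t.  Real scalars t : R are mapped into K by emb. *)
Definition atomic_norm (R : realType) (K : numFieldType) (emb : R -> K)
  (m n : nat) (Sigma : set 'M[K]_(m, n)) (x : 'M[K]_(m, n)) : \bar R :=
  ereal_inf [set (t%:E)%E | t in
    [set t : R | 0 <= t /\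
       exists c, cl_conv (Sigma `&` @unit_sphere K m n) c /\ x = emb t *: c]].

Definition E_set (R : realType) (K : numFieldType) (emb : R -> K)
  (m n : nat) (Sigma : set 'M[K]_(m, n)) : set 'M[K]_(m, n) :=
  [set x | (atomic_norm emb Sigma x < +oo)%E].

Definition descent_set (R : realType) (m n : nat) (K : numFieldType)
  (f : 'M[K]_(m, n) -> \bar R) (Sigma : set 'M[K]_(m, n)) : set 'M[K]_(m, n) :=
  \bigcup_(x in Sigma) [set z | (f (x + z)%R <= f x)%E].

Definition unique_minimizer (R : realType) (K : numFieldType) (m n : nat)
  (V : lmodType K) (M : 'M[K]_(m, n) -> V)
  (f : 'M[K]_(m, n) -> \bar R) (x0 : 'M[K]_(m, n)) : Prop :=
  (forall x, M x = M x0 -> (f x0 <= f x)%E) /\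
  (forall x, M x = M x0 -> (f x <= f x0)%E -> x = x0).

Definition prop8_conclusion (R : realType) (K : numFieldType) (emb : R -> K)
  (m n r : nat) : Prop :=
  descent_set (atomic_norm emb (@Sigma_r K m n r)) (@Sigma_r K m n r)
    = E_set emb (@Sigma_r K m n r)
  /\
  (forall (V : lmodType K) (M : {linear 'M[K]_(m, n) -> V}),
     (exists z : 'M[K]_(m, n), z != 0 /\ M z = 0) ->
     exists x0, @Sigma_r K m n r x0 /\
       ~ unique_minimizer M (atomic_norm emb (@Sigma_r K m n r)) x0).

From HB Require Import structures.
From mathcomp Require Import all_boot all_order all_algebra.
From mathcomp Require Import all_classical all_reals all_analysis.
From mathcomp Require Import complex.
From mathcomp Require Import ring.
Import Order.TTheory GRing.Theory Num.Theory.
Import numFieldNormedType.Exports.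
Local Open Scope ring_scope.

(* Every entry of a point of clconv(Sigma_r ∩ S(1)) has modulus at most 1, so
   ||x||_Sigma >= |x_ij|.  Conversely, padding a convex combination with an
   atom e and its opposite -e gives ||sum_q P_q||_Sigma <= sum_q ||P_q||_F for
   matrices P_q of rank at most r; in particular every matrix, a sum of
   rank-one matrices, has finite atomic norm.  Given z with z_p = |z_p| om != 0,
   the matrix x = -(N b + |z_p|) om E_p has norm at least N b + |z_p|, whereas
   x + z is the sum of the N rank-two matrices -b om E_p + v_q E_q, where
   v = z - z_p E_p; their Frobenius norms add up to at most
   N b + ||v||_F^2 / (2 b) <= N b + |z_p| once b is large.  If M z = 0 and
   z != 0, then x + z is another feasible point at least as good as x. *)

Lemma sqrtr_sqrD_le (R : rcfType) (a b : R) : 0 < a -> 0 <= b ->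
  Num.sqrt (a ^+ 2 + b) <= a + b / (2 * a).
Proof.
move=> a0 b0; have c0 : 0 <= a + b / (2 * a).
  by apply: addr_ge0; [exact: ltW | rewrite divr_ge0 // mulr_ge0 // ltW].
rewrite -(ger0_norm c0) -sqrtr_sqr ler_sqrt ?sqr_ge0 //.
have -> : (a + b / (2 * a)) ^+ 2 = a ^+ 2 + b + (b / (2 * a)) ^+ 2.
  by field; rewrite gt_eqF.
by rewrite lerDl sqr_ge0.
Qed.

Lemma sum_sqrtr_sqrD_le (R : rcfType) (I : finType) (b mu : R) (y : I -> R) :
  0 < b -> (forall q, 0 <= y q) -> \sum_q y q <= 2 * b * mu ->
  \sum_q Num.sqrt (b ^+ 2 + y q) <= b *+ #|I| + mu.
Proof.
move=> b0 y_ge0 y_sum.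
apply: le_trans; first by apply: ler_sum => q _; exact: sqrtr_sqrD_le.
rewrite big_split /= sumr_const lerD2l -mulr_suml ler_pdivrMr ?mulr_gt0 //.
by rewrite mulrC.
Qed.

Section FrobeniusNorm.
Context {K : numFieldType} {m n : nat}.
Implicit Types (X : 'M[K]_(m, n)) (S : set 'M[K]_(m, n)).

Lemma frob2Z (k : K) X : frob2 (k *: X) = `|k| ^+ 2 * frob2 X.
Proof.
rewrite /frob2 mulr_sumr; apply: eq_bigr => i _; rewrite mulr_sumr.
by apply: eq_bigr => j _; rewrite mxE normrM exprMn.
Qed.

Lemma frob2_eq0 X : (frob2 X == 0) = (X == 0).
Proof.
apply/eqP/eqP => [X0|->]; last first.
  by rewrite /frob2 big1 // => i _; rewrite big1 // => j _; rewrite mxE normr0 expr0n.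
apply/matrixP => i j; rewrite mxE; apply/eqP; rewrite -normr_eq0 -sqrf_eq0; apply/eqP.
have sum_ge0 k : 0 <= \sum_(l < n) `|X k l| ^+ 2 by rewrite sumr_ge0 // => l _; rewrite sqr_ge0.
have Xi := psumr_eq0P (fun k _ => sum_ge0 k) X0 (i := i) isT.
by apply: (psumr_eq0P _ Xi) => // l _; rewrite sqr_ge0.
Qed.

Lemma frob2_delta_add (c d : K) (p q : 'I_m * 'I_n) : (q = p -> d = 0) ->
  frob2 (c *: delta_mx p.1 p.2 + d *: delta_mx q.1 q.2) = `|c| ^+ 2 + `|d| ^+ 2.
Proof.
move=> qp_d0; rewrite /frob2 pair_bigA /=.
have sum_at (s : 'I_m * 'I_n) (t : K) :
    \sum_(x : 'I_m * 'I_n) (if x == s then t else 0) = t.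
  by rewrite (bigD1 s) //= eqxx big1 ?addr0 // => x /negbTE ->.
rewrite -[in RHS](sum_at p (`|c| ^+ 2)) -[in RHS](sum_at q (`|d| ^+ 2)) -big_split /=.
apply: eq_bigr => -[i j] _; case: p q qp_d0 => [p1 p2] [q1 q2] qp_d0 /=.
rewrite !mxE -[(i == p1) && _]/((i, j) == (p1, p2)) -[(i == q1) && _]/((i, j) == (q1, q2)).
have [ep|np] := eqVneq (i, j) (p1, p2); have [eq|nq] := eqVneq (i, j) (q1, q2).
- by rewrite qp_d0 -?eq // mulr1 mul0r addr0 normr0 expr0n addr0.
- by rewrite mulr1 mulr0 !addr0.
- by rewrite mulr1 mulr0 !add0r.
- by rewrite !mulr0 addr0 normr0 expr0n.
Qed.

Lemma unit_sphere_entry_le1 X i j : unit_sphere X -> `|X i j| <= 1.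
Proof.
rewrite /unit_sphere /= /frob2 => X1.
rewrite -(@expr_le1 _ 2) // -X1 (bigD1 i) //= (bigD1 j) //= -addrA lerDl.
by rewrite addr_ge0 ?sumr_ge0 // => k _; rewrite ?sumr_ge0 // => l _; rewrite sqr_ge0.
Qed.

Lemma conv_hull_entry_le1 S i j c : (forall a, S a -> `|a i j| <= 1) ->
  conv_hull S c -> `|c i j| <= 1.
Proof.
move=> S_le1 [k [w [a [w_ge0 [w_sum1 [Sa ->]]]]]].
rewrite summxE (le_trans (ler_norm_sum _ _ _)) // -w_sum1 ler_sum // => l _.
by rewrite mxE normrM ger0_norm // ler_piMr // S_le1.
Qed.

Lemma cl_conv_entry_le1 S i j c : (forall a, S a -> `|a i j| <= 1) ->
  cl_conv S c -> `|c i j| <= 1.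
Proof.
move=> S_le1 Sc; apply/ler_addgt0Pr => e e0.
have [d [Sd [_ /(_ i j) cd]]] := Sc _ (@nbhsx_ballx _ _ c e e0).
rewrite -[c i j](subrK (d i j)) (le_trans (ler_normD _ _)) // addrC.
by apply: lerD; [exact: conv_hull_entry_le1 S_le1 Sd | exact: ltW].
Qed.

Lemma conv_hull_subconvex (I : finType) S e (w : I -> K) (a : I -> 'M[K]_(m, n)) :
  S e -> (forall b, S b -> S (- b)) -> (forall q, 0 <= w q) ->
  \sum_q w q <= 1 -> (forall q, S (a q)) -> conv_hull S (\sum_q w q *: a q).
Proof.
move=> Se S_opp w_ge0 w_le1 Sa.
(* the missing weight 1 - sum_q w q is shared equally by e and - e *)
rewrite (big_enum_val (A := predT)) /=; rewrite (big_enum_val (A := predT)) /= in w_le1.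
set k := #|_| in w_le1 *; set d := (1 - \sum_(i < k) w (enum_val i)) / 2.
pose W (i : 'I_(k + 2)) := if fintype.split i is inl j then w (enum_val j) else d.
pose B (i : 'I_(k + 2)) :=
  match fintype.split i with inl j => a (enum_val j) | inr t => if t == 0 then e else - e end.
have splitl j : fintype.split (lshift 2 j) = inl j := unsplitK (inl j).
have splitr t : fintype.split (rshift k t) = inr t := unsplitK (inr t).
exists (k + 2)%N, W, B; split; [|split; [|split]].
- move=> i; rewrite /W; case: fintype.split => // _.
  by rewrite divr_ge0 // subr_ge0.
- rewrite big_split_ord /= /W; under eq_bigr do rewrite splitl.
  under [X in _ + X]eq_bigr do rewrite splitr.
  by rewrite !big_ord_recr big_ord0 /= add0r /d; field.
- move=> i; rewrite /B; case: fintype.split => [j|t]; first exact: Sa.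
  by case: ifP => _; last apply: S_opp.
- apply/esym; rewrite big_split_ord /= /W /B; under eq_bigr do rewrite splitl.
  under [X in _ + X]eq_bigr do rewrite splitr.
  by rewrite !big_ord_recr big_ord0 /= add0r scalerN subrr addr0.
Qed.
End FrobeniusNorm.

Section AtomicNormLowRank.
(* The scalars K are R or R[i]: [emb] embeds the reals into K and [nr] is the
   modulus as a real number. *)
Context {R : realType} {K : numFieldType} (emb : {rmorphism R -> K}) (nr : K -> R).
Hypothesis ler_emb : {mono emb : s t / s <= t}.
Hypothesis normr_nr : forall x, `|x| = emb (nr x).

Lemma emb_inj : injective emb.
Proof. exact: inc_inj. Qed.

Lemma emb_ge0 t : (0 <= emb t) = (0 <= t).
Proof. by rewrite -(rmorph0 emb) ler_emb. Qed.

Lemma emb_eq0 t : (emb t == 0) = (t == 0).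
Proof. by rewrite -(rmorph0 emb) (inj_eq emb_inj). Qed.

Lemma nr_ge0 x : 0 <= nr x.
Proof. by rewrite -emb_ge0 -normr_nr. Qed.

Lemma nr_eq x t : `|x| = emb t -> nr x = t.
Proof. by move=> xt; apply: emb_inj; rewrite -normr_nr. Qed.

Lemma nr_gt0 x : (0 < nr x) = (x != 0).
Proof. by rewrite lt_def nr_ge0 andbT -emb_eq0 -normr_nr normr_eq0. Qed.

Context {m n : nat}.
Implicit Types (X : 'M[K]_(m, n)).

Definition frob X : R := Num.sqrt (\sum_(q : 'I_m * 'I_n) nr (X q.1 q.2) ^+ 2).

Lemma sqr_frob X : frob X ^+ 2 = \sum_(q : 'I_m * 'I_n) nr (X q.1 q.2) ^+ 2.
Proof. by rewrite sqr_sqrtr // sumr_ge0 // => q _; rewrite sqr_ge0. Qed.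

Lemma frob2_frob X : frob2 X = emb (frob X ^+ 2).
Proof.
rewrite sqr_frob rmorph_sum /frob2 pair_bigA; apply: eq_bigr => q _.
by rewrite rmorphXn -normr_nr.
Qed.

Lemma frobE X t : frob2 X = emb t -> frob X = Num.sqrt t.
Proof. by rewrite frob2_frob => /emb_inj <-; rewrite sqrtr_sqr ger0_norm ?sqrtr_ge0. Qed.

Lemma frob_eq0 X : (frob X == 0) = (X == 0).
Proof. by rewrite -frob2_eq0 frob2_frob emb_eq0 sqrf_eq0. Qed.

Lemma frob0 : frob 0 = 0.
Proof. by apply/eqP; rewrite frob_eq0. Qed.

Variable r : nat.
Local Notation atoms := (@Sigma_r K m n r `&` @unit_sphere K m n)%classic.
Local Notation anorm := (atomic_norm emb (@Sigma_r K m n r)).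

Lemma Sigma_rZ (k : K) X : Sigma_r r X -> Sigma_r r (k *: X).
Proof. exact/leq_trans/mxrank_scale. Qed.

Lemma Sigma_r_delta_add (c d : K) (p q : 'I_m * 'I_n) : (2 <= r)%N ->
  Sigma_r r (c *: delta_mx p.1 p.2 + d *: delta_mx q.1 q.2).
Proof.
move=> r2; apply: leq_trans (mxrank_add _ _) (leq_trans _ r2).
by rewrite -[2%N]/(1 + 1)%N leq_add // (leq_trans (mxrank_scale _ _)) ?mxrank_delta.
Qed.

Lemma atomsN X : atoms X -> atoms (- X).
Proof.
case=> SX X1; split; first by rewrite -scaleN1r; apply: Sigma_rZ.
by rewrite /unit_sphere /= -scaleN1r frob2Z normrN1 expr1n mul1r.
Qed.

Lemma atoms_normalize X : Sigma_r r X -> X != 0 -> atoms ((emb (frob X))^-1 *: X).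
Proof.
move=> SX X0; split; first exact: Sigma_rZ.
have fX0 : emb (frob X) != 0 by rewrite emb_eq0 frob_eq0.
rewrite /unit_sphere /= frob2Z frob2_frob normfV ger0_norm ?emb_ge0 ?sqrtr_ge0 //.
by rewrite rmorphXn exprVn mulVf // expf_neq0.
Qed.

Lemma atoms_delta i j : (0 < r)%N -> atoms (delta_mx i j).
Proof.
move=> r0; split; first by rewrite /Sigma_r /= mxrank_delta.
have := @frob2_delta_add K m n 1 0 (i, j) (i, j) (fun _ => erefl).
by rewrite scale1r scale0r addr0 normr1 normr0 expr1n expr0n addr0.
Qed.

Lemma atomic_norm_ge_entry X i j : ((nr (X i j))%:E <= anorm X)%E.
Proof.
apply/ereal_infP => _ [t [t0 [c [Cc ->]]] <-]; rewrite lee_fin -ler_emb -normr_nr.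
rewrite mxE normrM ger0_norm ?emb_ge0 // ler_piMr ?emb_ge0 //.
by move: Cc; apply: cl_conv_entry_le1 => a [_]; apply: unit_sphere_entry_le1.
Qed.

Lemma atomic_norm_le_sum_frob (I : finType) e (P : I -> 'M[K]_(m, n)) T :
  atoms e -> (forall q, Sigma_r r (P q)) -> 0 < T -> \sum_q frob (P q) <= T ->
  (anorm (\sum_q P q) <= T%:E)%E.
Proof.
move=> Ae SP T0 sumT.
pose b q := if P q == 0 then e else (emb (frob (P q)))^-1 *: P q.
pose w q := emb (frob (P q) / T).
have Pb q : P q = emb T *: (w q *: b q).
  rewrite /w /b scalerA -rmorphM mulrCA divff ?gt_eqF // mulr1.
  case: eqP => [->|/eqP P0]; first by rewrite frob0 rmorph0 scale0r.
  by rewrite scalerA mulfV ?scale1r // emb_eq0 frob_eq0.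
rewrite (eq_bigr _ (fun q _ => Pb q)) -scaler_sumr.
apply: ereal_inf_lbound; exists T => //; split; first exact: ltW.
exists (\sum_q w q *: b q); split => //; apply: subset_closure.
apply: (conv_hull_subconvex _ _ _ _ _ Ae atomsN) => [q||q].
- by rewrite emb_ge0 divr_ge0 ?sqrtr_ge0 ?ltW.
- by rewrite -rmorph_sum -(rmorph1 emb) ler_emb -mulr_suml ler_pdivrMr // mul1r.
- by rewrite /b; case: eqP => // /eqP; exact: atoms_normalize.
Qed.

Lemma atomic_norm_lt_pinfty X : (0 < r)%N -> (0 < m)%N -> (0 < n)%N ->
  (anorm X < +oo)%E.
Proof.
move=> r0 m0 n0; set p := (Ordinal m0, Ordinal n0).
pose P (q : 'I_m * 'I_n) := X q.1 q.2 *: delta_mx q.1 q.2.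
have -> : X = \sum_q P q by rewrite {1}(matrix_sum_delta X) pair_bigA.
have sum_ge0 : 0 <= \sum_q frob (P q) by rewrite sumr_ge0 // => q _; rewrite sqrtr_ge0.
apply: le_lt_trans (ltry (\sum_q frob (P q) + 1)).
apply: (atomic_norm_le_sum_frob _ (delta_mx p.1 p.2)) => [|q||].
- exact: atoms_delta.
- by apply: Sigma_rZ; rewrite /Sigma_r /= mxrank_delta.
- by rewrite ltr_pwDr.
- by rewrite lerDl.
Qed.

Lemma descent_at_entry (z : 'M[K]_(m, n)) (p : 'I_m * 'I_n) :
  (2 <= r)%N -> z p.1 p.2 != 0 ->
  exists2 x, Sigma_r r x & (anorm (x + z) <= anorm x)%E.
Proof.
move=> r2 zp0; pose E := delta_mx p.1 p.2 : 'M[K]_(m, n).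
set mu := nr (z p.1 p.2); have mu0 : 0 < mu by rewrite nr_gt0.
have emu0 : emb mu != 0 by rewrite emb_eq0 gt_eqF.
set om := z p.1 p.2 / emb mu.
have z_p : z p.1 p.2 = emb mu * om by rewrite mulrC divfK.
have norm_om : `|om| = 1.
  have emu_ge0 : 0 <= emb mu by rewrite emb_ge0 ltW.
  by rewrite normrM normfV (ger0_norm emu_ge0) normr_nr divff.
set v := z - z p.1 p.2 *: E.
have v_p : v p.1 p.2 = 0 by rewrite !mxE !eqxx mulr1 subrr.
set b := frob v ^+ 2 / (2 * mu) + 1.
have b0 : 0 < b by rewrite ltr_pwDr // divr_ge0 ?sqr_ge0 // mulr_ge0 // ltW.
set u := - (emb b * om).
have norm_u : `|u| = emb b by rewrite normrN normrM norm_om mulr1 ger0_norm ?emb_ge0 ?ltW.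
pose P (q : 'I_m * 'I_n) := u *: E + v q.1 q.2 *: delta_mx q.1 q.2.
set T := b *+ #|{: 'I_m * 'I_n}| + mu.
have T0 : 0 < T by rewrite ltr_wpDl // mulrn_wge0 // ltW.
exists (- (emb T * om) *: E); first by apply: Sigma_rZ; rewrite /Sigma_r /= mxrank_delta ltnW.
have x_entry : (T%:E <= anorm (- (emb T * om) *: E))%E.
  have := atomic_norm_ge_entry (- (emb T * om) *: E) p.1 p.2.
  rewrite (@nr_eq _ T) // !mxE !eqxx mulr1 normrN normrM norm_om mulr1.
  by rewrite ger0_norm // emb_ge0 ltW.
apply: le_trans x_entry.
have -> : - (emb T * om) *: E + z = \sum_q P q.
  rewrite big_split /= sumr_const.
  rewrite -(pair_bigA _ (fun i j => v i j *: delta_mx i j)) -matrix_sum_delta /v /T z_p.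
  rewrite rmorphD rmorphMn mulrDl opprD scalerDl scalerMnl /u mulNrn -mulrnAl.
  rewrite -addrA [_ + z]addrC !scaleNr; reflexivity.
apply: (atomic_norm_le_sum_frob _ E) => [|q||] //.
- exact/atoms_delta/(leq_trans _ r2).
- exact: Sigma_r_delta_add.
have frob_P q : frob (P q) = Num.sqrt (b ^+ 2 + nr (v q.1 q.2) ^+ 2).
  apply: frobE; rewrite frob2_delta_add; last by move=> ->.
  by rewrite norm_u normr_nr -!rmorphXn -rmorphD.
under eq_bigr do rewrite frob_P.
apply: sum_sqrtr_sqrD_le => // [q|]; first exact: sqr_ge0.
have mu2 : 2 * mu != 0 by rewrite mulf_neq0 ?gt_eqF.
rewrite -sqr_frob mulrAC mulrC /b mulrDl divfK // mul1r lerDl.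
by rewrite mulr_ge0 // ltW.
Qed.

Lemma descent_exists z : (2 <= r)%N ->
  exists2 x, Sigma_r r x & (anorm (x + z) <= anorm x)%E.
Proof.
move=> r2; have [->|z0] := eqVneq z 0.
  by exists 0; rewrite ?addr0 // /Sigma_r /= mxrank0.
have [p zp0] : exists p : 'I_m * 'I_n, z p.1 p.2 != 0.
  apply/existsP; apply: contraNT z0; rewrite negb_exists => /forallP z_0.
  by apply/eqP/matrixP => i j; rewrite mxE; apply/eqP/negbNE/(z_0 (i, j)).
exact: descent_at_entry zp0.
Qed.

Lemma prop8_conclusion_of : (0 < m)%N -> (0 < n)%N -> (2 <= r)%N ->
  prop8_conclusion emb m n r.
Proof.
move=> m0 n0 r2; split.
  apply/seteqP; split => z _; first exact: atomic_norm_lt_pinfty (ltnW r2) m0 n0.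
  by have [x Sx xz] := descent_exists z r2; exists x.
move=> V M [z [z0 Mz0]]; have [x Sx xz] := descent_exists z r2.
exists x; split => // -[_ min_uniq].
have Mxz : M (x + z) = M x by rewrite linearD Mz0 addr0.
have := min_uniq _ Mxz xz; rewrite -{2}[x]addr0 => /addrI z_eq0.
by rewrite z_eq0 eqxx in z0.
Qed.

End AtomicNormLowRank.

Theorem proposition8 (R : realType) (m n r : nat) :
  (0 < m)%N -> (0 < n)%N -> (2 <= r)%N ->
  prop8_conclusion (fun t : R => t) m n r /\
  prop8_conclusion (fun t : R => ((t%:C)%C : R[i])) m n r.
Proof.
move=> m0 n0 r2; split.
  exact: (prop8_conclusion_of idfun Num.norm).
apply: (prop8_conclusion_of (real_complex R)
  (fun z => Num.sqrt (complex.Re z ^+ 2 + complex.Im z ^+ 2))) => //.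
- exact: lecR.
- exact: normc_def.
Qed.
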